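(* Let $\alpha,\beta\in\mathbb{R}$ and let $m\ge 0$ be an integer. Let $b_0,\dots,b_m$ be the unique solution of the lower-triangular system $$\sum_{k=0}^{i}\frac{(-1)^{i-k}}{i-k+1}\,b_k=\frac{(-1)^{i+1}}{i+2}-\binom{-\alpha}{i+1},\qquad i=0,1,\dots,m,$$ and let $b'_0,\dots,b'_m$ be the unique solution of the same system with $\alpha$ replaced by $\beta$. Define $$c_i=\sum_{k=i}^{m}\binom{k}{i}(-1)^{k-i}\,b_k,\qquad d_i=\sum_{k=i}^{m}\binom{k}{i}(-1)^{k-i}\,b'_k,\qquad i=0,\dots,m.$$ Then for every integer $n\ge 0$, every $h>0$, and every real polynomial $f$ of degree at most $m$, $$\int_{-\alpha h}^{(n+\beta)h} f(t)\,dt \;=\; h\sum_{i=0}^{n} f(ih)\;+\;h\sum_{i=0}^{m} c_i\, f(ih)\;+\;h\sum_{i=0}^{m} d_i\, f\big((n-i)h\big).$$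
   Context: For real $x$ and integer $j\ge 0$, $\binom{x}{j}$ denotes the generalized binomial coefficient $x(x-1)\cdots(x-j+1)/j!$ (with $\binom{x}{0}=1$). The integral limits are oriented, so for negative $\alpha$ or $\beta$ the nodes $ih$ may lie outside the range of integration, and when $m>n$ some nodes $ih$ or $(n-i)h$ lie outside $[0,nh]$; the formula is to be read literally with the integrand evaluated at those points. In the system for $b_k$, the coefficient of $b_i$ in the $i$-th equation is $1$, so the system is uniquely solvable by forward substitution. *)

From Stdlib Require Import Reals Factorial.
From Coquelicot Require Import Coquelicot.
Open Scope R_scope.

Fixpoint falling (x : R) (j : nat) : R :=
  match j with
  | O => 1
  | S j' => falling x j' * (x - INR j')
  end.

Definition gbinom (x : R) (j : nat) : R := falling x j / INR (fact j).

Definition solves_system (a : R) (m : nat) (b : nat -> R) : Prop :=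
  forall i : nat, (i <= m)%nat ->
    sum_n_m (fun k => (-1) ^ (i - k) / INR (i - k + 1) * b k) 0 i
    = (-1) ^ (i + 1) / INR (i + 2) - gbinom (- a) (i + 1).

Definition corr_coef (m : nat) (b : nat -> R) (i : nat) : R :=
  sum_n_m (fun k => Binomial.C k i * (-1) ^ (k - i) * b k) i m.

Definition polyR (m : nat) (p : nat -> R) (t : R) : R :=
  sum_n (fun j => p j * t ^ j) m.

From Stdlib Require Import Reals Lra Lia FunctionalExtensionality.
From Coquelicot Require Import Coquelicot.
Open Scope R_scope.

(* Let Δ be the forward difference and L_b g = Σ_k b_k Δ^k g(0), so that
   L_b g = Σ_i c_i g(i).  Work in the basis φ_j = d/dt binom(t, j+1): it satisfies
   Δφ_{j+1} = φ_j, φ_j(0) = (-1)^j/(j+1) and ∫φ_j = binom(., j+1).  In this basis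
   the system defining b says exactly that L_b(ΔG) = G(0) - ∫_{-α}^{1-α} G for every
   polynomial G of degree at most m+1.  Now write f = ΔF.  The sum Σ_{i≤n} f(i)
   telescopes.  The two end corrections become integrals of F over unit intervals
   at the two ends, and ∫_{-α}^{n+β} ΔF is the difference of those same two
   integrals.  The case of a general step h follows by scaling. *)

Lemma sum_n_ext_R (a b : nat -> R) n : (forall i, a i = b i) -> sum_n a n = sum_n b n :> R.
Proof. apply sum_n_ext. Qed.

Lemma sum_n_SR (a : nat -> R) n : sum_n a (S n) = sum_n a n + a (S n) :> R.
Proof. exact (sum_Sn a n). Qed.

Lemma sum_n_shift (a : nat -> R) n : sum_n a (S n) = a O + sum_n (fun i => a (S i)) n :> R.
Proof.
  induction n as [|n IH].
  - now rewrite sum_n_SR, !sum_O.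
  - rewrite sum_n_SR, IH, sum_n_SR; ring.
Qed.

Lemma sum_n_lin (a b : nat -> R) c n :
  sum_n (fun k => a k + c * b k) n = sum_n a n + c * sum_n b n :> R.
Proof.
  induction n as [|n IH].
  - now rewrite !sum_O.
  - rewrite !sum_n_SR, IH; ring.
Qed.

Lemma sum_n_mult_l_R (a : nat -> R) c n : sum_n (fun k => c * a k) n = c * sum_n a n :> R.
Proof. apply (sum_n_mult_l (K := R_Ring)). Qed.

Lemma sum_n_mult_r_R (a : nat -> R) c n : sum_n (fun k => a k * c) n = sum_n a n * c :> R.
Proof. apply (sum_n_mult_r (K := R_Ring)). Qed.

Lemma sum_n_telescope (u : nat -> R) n : sum_n (fun i => u (S i) - u i) n = u (S n) - u O :> R.
Proof.
  induction n as [|n IH].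
  - now rewrite sum_O.
  - rewrite sum_n_SR, IH; ring.
Qed.

Lemma sum_n_skip_zeros (a : nat -> R) i m : (i <= m)%nat ->
  (forall k, (k < i)%nat -> a k = 0) -> sum_n a m = sum_n_m a i m.
Proof.
  intros Him Ha; destruct i as [|i]; [reflexivity |].
  unfold sum_n; rewrite (sum_n_m_Chasles a 0 i m), (sum_n_m_ext_loc a (fun _ => zero) 0 i),
    sum_n_m_const_zero, plus_zero_l by (intros; try apply Ha; lia).
  reflexivity.
Qed.

Lemma pow_m1_sub_add k i : (i <= k)%nat -> (-1) ^ (k - i) = (-1) ^ (k + i).
Proof.
  intro Hik; replace (k + i)%nat with (k - i + 2 * i)%nat by lia.
  rewrite pow_add, pow_mult; replace ((-1) ^ 2) with 1 by ring; rewrite pow1; ring.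
Qed.

(** * Polynomial functions *)

Inductive poly_lt : nat -> (R -> R) -> Prop :=
  | poly_lt0 : poly_lt 0 (fun _ => 0)
  | poly_ltS d g a : poly_lt d g -> poly_lt (S d) (fun t => g t + a * t ^ d).

Lemma poly_lt_ext d g g' : poly_lt d g -> (forall t, g t = g' t) -> poly_lt d g'.
Proof. intros Hg E; apply functional_extensionality in E; now subst. Qed.

Lemma poly_lt_S d g : poly_lt d g -> poly_lt (S d) g.
Proof. intro Hg; apply (poly_lt_ext _ _ _ (poly_ltS d g 0 Hg)); intro; ring. Qed.

Lemma poly_lt_le d d' g : (d <= d')%nat -> poly_lt d g -> poly_lt d' g.
Proof. induction 1; auto using poly_lt_S. Qed.

Lemma poly_lt_zero d : poly_lt d (fun _ => 0).
Proof. apply (poly_lt_le 0); [lia | constructor]. Qed.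

Lemma poly_lt_pow d : poly_lt (S d) (fun t => t ^ d).
Proof. apply (poly_lt_ext _ _ _ (poly_ltS d _ 1 (poly_lt_zero d))); intro; ring. Qed.

Lemma poly_lt_lin d g h c :
  poly_lt d g -> poly_lt d h -> poly_lt d (fun t => g t + c * h t).
Proof.
  intro Hg; revert h; induction Hg as [|d g a Hg IH]; intros h Hh.
  - inversion Hh; apply (poly_lt_ext _ _ _ poly_lt0); intro; ring.
  - inversion Hh as [|? h' a' Hh']; subst.
    apply (poly_lt_ext _ _ _ (poly_ltS d _ (a + c * a') (IH h' Hh'))); intro; ring.
Qed.

Lemma poly_lt_scal d g c : poly_lt d g -> poly_lt d (fun t => c * g t).
Proof.
  intro Hg; apply (poly_lt_ext _ _ _ (poly_lt_lin d _ g c (poly_lt_zero d) Hg)); intro; ring.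
Qed.

Lemma poly_lt_mul_id d g : poly_lt d g -> poly_lt (S d) (fun t => g t * t).
Proof.
  induction 1 as [|d g a Hg IH].
  - apply (poly_lt_ext _ _ _ (poly_lt_zero 1)); intro; ring.
  - apply (poly_lt_ext _ _ _ (poly_ltS _ _ a IH)); intro; simpl; ring.
Qed.

Lemma poly_lt_mul_affine d g u c :
  poly_lt d g -> poly_lt (S d) (fun t => g t * (u * t + c)).
Proof.
  intro Hg.
  apply (poly_lt_ext _ _ _ (poly_lt_lin _ _ _ c (poly_lt_scal _ _ u (poly_lt_mul_id d g Hg))
                               (poly_lt_S d g Hg))).
  intro; ring.
Qed.

Lemma poly_lt_comp_affine d g u c : poly_lt d g -> poly_lt d (fun s => g (u * s + c)).
Proof.
  assert (Hpow : forall j, poly_lt (S j) (fun s => (u * s + c) ^ j)).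
  { induction j as [|j IH].
    - apply (poly_lt_ext _ _ _ (poly_lt_pow 0)); intro; reflexivity.
    - apply (poly_lt_ext _ _ _ (poly_lt_mul_affine _ _ u c IH)); intro; simpl; ring. }
  induction 1 as [|d g a Hg IH].
  - constructor.
  - exact (poly_lt_lin _ _ _ a (poly_lt_S _ _ IH) (Hpow d)).
Qed.

Lemma poly_lt_continuous d g x : poly_lt d g -> continuous g x.
Proof.
  induction 1 as [|d g a Hg IH].
  - apply continuous_const.
  - apply (continuous_plus g (fun t => a * t ^ d)); auto.
    apply ex_derive_continuous; auto_derive; auto.
Qed.

Lemma poly_lt_polyR m p : poly_lt (S m) (polyR m p).
Proof.
  unfold polyR; induction m as [|m IH].
  - apply (poly_lt_ext _ _ _ (poly_ltS 0 _ (p O) poly_lt0)); intro; rewrite sum_O; ring.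
  - apply (poly_lt_ext _ _ _ (poly_ltS _ _ (p (S m)) IH)); intro; rewrite sum_n_SR; ring.
Qed.

Definition leading (d : nat) (a : R) (g : R -> R) : Prop :=
  poly_lt d (fun t => g t - a * t ^ d).

Lemma leading_ext d a g g' : leading d a g -> (forall t, g t = g' t) -> leading d a g'.
Proof. intros H E; apply (poly_lt_ext _ _ _ H); intro; rewrite E; ring. Qed.

Lemma leading_poly_lt d a g : leading d a g -> poly_lt (S d) g.
Proof. intro H; apply (poly_lt_ext _ _ _ (poly_ltS d _ a H)); intro; ring. Qed.

Lemma poly_lt_leading d g : poly_lt (S d) g -> exists a, leading d a g.
Proof.
  intro Hg; inversion Hg as [|? g' a Hg']; subst; exists a.
  apply (poly_lt_ext _ _ _ Hg'); intro; ring.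
Qed.

Lemma leading_add d a a' g g' :
  leading d a g -> leading d a' g' -> leading d (a + a') (fun t => g t + g' t).
Proof. intros H H'; apply (poly_lt_ext _ _ _ (poly_lt_lin _ _ _ 1 H H')); intro; ring. Qed.

Lemma leading_scal d a g c : leading d a g -> leading d (c * a) (fun t => c * g t).
Proof. intro H; apply (poly_lt_ext _ _ _ (poly_lt_scal _ _ c H)); intro; ring. Qed.

Lemma leading_mul_lin d a g r :
  leading d a g -> leading (S d) a (fun t => g t * (t - r)).
Proof.
  intro H.
  apply (poly_lt_ext _ _ _ (poly_lt_lin _ _ _ (- r) (poly_lt_mul_id _ _ H) (leading_poly_lt _ _ _ H))).
  intro; simpl; ring.
Qed.

Lemma poly_lt_basis_ind (u : nat -> R -> R) (P : (R -> R) -> Prop) d :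
  (forall j, exists a, a <> 0 /\ leading j a (u j)) ->
  P (fun _ => 0) ->
  (forall j g c, (j < d)%nat -> poly_lt j g -> P g -> P (fun t => g t + c * u j t)) ->
  forall g, poly_lt d g -> P g.
Proof.
  intros Hu P0 Pstep; induction d as [|d IH]; intros g Hg.
  - now inversion Hg.
  - destruct (poly_lt_leading d g Hg) as [a' Hg'], (Hu d) as [a [Ha Hud]].
    set (g0 := fun t => g t + (- (a' / a)) * u d t).
    assert (Hg0 : poly_lt d g0).
    { apply (poly_lt_ext _ _ _ (poly_lt_lin _ _ _ (- (a' / a)) Hg' Hud)).
      intro; unfold g0; field; auto. }
    replace g with (fun t => g0 t + (a' / a) * u d t)
      by (apply functional_extensionality; intro; unfold g0; ring).
    apply Pstep; [lia | exact Hg0 |].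
    apply IH; [intros j h c Hj; apply Pstep; lia | exact Hg0].
Qed.

(** * Generalized binomial coefficients and their derivatives *)

Lemma INR_S_neq_0 n : INR (S n) <> 0.
Proof. apply not_0_INR; lia. Qed.

Lemma gbinom_0 x : gbinom x 0 = 1.
Proof. unfold gbinom; simpl; field. Qed.

Lemma gbinom_S x j : gbinom x (S j) = gbinom x j * (x - INR j) / INR (S j).
Proof.
  unfold gbinom; rewrite fact_simpl, mult_INR; simpl falling.
  field; split; [apply INR_fact_neq_0 | apply INR_S_neq_0].
Qed.

Lemma gbinom_1 x : gbinom x 1 = x.
Proof. rewrite gbinom_S, gbinom_0; simpl; field. Qed.

Lemma gbinom_pascal x j : gbinom (x + 1) (S j) = gbinom x (S j) + gbinom x j.
Proof.
  induction j as [|j IH].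
  - rewrite !gbinom_1, gbinom_0; ring.
  - rewrite (gbinom_S (x + 1) (S j)), IH, !(gbinom_S x), !S_INR.
    field; pose proof (pos_INR j); lra.
Qed.

Lemma gbinom_nat_gt k i : (k < i)%nat -> gbinom (INR k) i = 0.
Proof.
  induction 1 as [|i Hi IH]; rewrite gbinom_S.
  - rewrite Rminus_diag; field; apply INR_S_neq_0.
  - rewrite IH; field; apply INR_S_neq_0.
Qed.

Lemma gbinom_nat k i : (i <= k)%nat -> gbinom (INR k) i = Binomial.C k i.
Proof.
  revert i; induction k as [|k IH]; intros [|i] Hi.
  - now rewrite gbinom_0, C_n_0.
  - lia.
  - now rewrite gbinom_0, C_n_0.
  - rewrite S_INR, gbinom_pascal.
    destruct (Nat.eq_dec i k) as [-> | Hik].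
    + rewrite gbinom_nat_gt, IH, !C_n_n by lia; ring.
    + rewrite !IH, <- pascal by lia; ring.
Qed.

Lemma gbinom_leading j : exists a, 0 < a /\ leading j a (fun t => gbinom t j).
Proof.
  induction j as [|j [a [Ha H]]].
  - exists 1; split; [lra |].
    apply (leading_ext _ _ (fun _ => 1)); [| intro; now rewrite gbinom_0].
    apply (poly_lt_ext _ _ _ poly_lt0); intro; simpl; ring.
  - exists (/ INR (S j) * a); split.
    + apply Rmult_lt_0_compat; auto; apply Rinv_0_lt_compat, lt_0_INR; lia.
    + apply (leading_ext _ _ _ _ (leading_scal _ _ _ (/ INR (S j)) (leading_mul_lin _ _ _ (INR j) H))).
      intro t; rewrite gbinom_S; field; apply INR_S_neq_0.
Qed.

Definition fwd (g : R -> R) (t : R) : R := g (t + 1) - g t.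

(* The derivative of [t ↦ gbinom t (S j)], obtained by differentiating gbinom_S. *)
Fixpoint dgbinom (j : nat) (t : R) : R :=
  match j with
  | O => 1
  | S j' => (dgbinom j' t * (t - INR (S j')) + gbinom t (S j')) / INR (S (S j'))
  end.

Lemma is_derive_gbinom j t : is_derive (fun x => gbinom x (S j)) t (dgbinom j t).
Proof.
  induction j as [|j IH].
  - apply (is_derive_ext (fun x => x)); [intro; now rewrite gbinom_1 |].
    apply (is_derive_id (K := R_AbsRing)).
  - assert (E : forall x, / INR (S (S j)) * (gbinom x (S j) * (x - INR (S j)))
                          = gbinom x (S (S j))).
    { intro x; rewrite (gbinom_S x (S j)); field; apply INR_S_neq_0. }
    apply (is_derive_ext _ _ _ _ E).
    replace (dgbinom (S j) t)
      with (/ INR (S (S j)) * (dgbinom j t * (t - INR (S j)) + gbinom t (S j) * 1))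
      by (cbn [dgbinom]; field; apply INR_S_neq_0).
    apply is_derive_scal, (is_derive_mult (fun x => gbinom x (S j)) (fun x => x - INR (S j))); auto.
    + auto_derive; auto.
    + intros; apply Rmult_comm.
Qed.

Lemma dgbinom_fwd j t : fwd (dgbinom (S j)) t = dgbinom j t.
Proof.
  assert (Hshift : is_derive (fun x => gbinom (x + 1) (S (S j))) t (dgbinom (S j) (t + 1))).
  { assert (Hs : is_derive (fun x => x + 1) t 1) by (auto_derive; auto; ring).
    pose proof (is_derive_comp _ _ _ _ _ (is_derive_gbinom (S j) (t + 1)) Hs) as H.
    rewrite (scal_one (V := R_NormedModule)) in H; exact H. }
  assert (E : forall x, gbinom (x + 1) (S (S j)) - gbinom x (S (S j)) = gbinom x (S j)).
  { intro x; rewrite gbinom_pascal; ring. }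
  pose proof (is_derive_ext _ _ _ _ E (is_derive_minus _ _ _ _ _ Hshift (is_derive_gbinom (S j) t)))
    as Hdiff.
  transitivity (Derive (fun x => gbinom x (S j)) t).
  - symmetry; exact (is_derive_unique _ _ _ Hdiff).
  - exact (is_derive_unique _ _ _ (is_derive_gbinom j t)).
Qed.

Lemma dgbinom_at0 j : dgbinom j 0 = (-1) ^ j / INR (j + 1).
Proof.
  induction j as [|j IH]; cbn [dgbinom].
  - simpl; field.
  - pose proof (gbinom_nat_gt 0 (S j)) as Z; simpl INR in Z.
    rewrite IH, Z by lia; rewrite !plus_INR, !S_INR; simpl.
    field; pose proof (pos_INR j); lra.
Qed.

Lemma dgbinom_leading j : exists a, 0 < a /\ leading j a (dgbinom j).
Proof.
  induction j as [|j [a [Ha H]]].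
  - exists 1; split; [lra |].
    apply (poly_lt_ext _ _ _ poly_lt0); intro; simpl; ring.
  - destruct (gbinom_leading (S j)) as [a' [Ha' H']].
    exists (/ INR (S (S j)) * (a + a')); split.
    + apply Rmult_lt_0_compat; [apply Rinv_0_lt_compat, lt_0_INR; lia | lra].
    + apply (leading_ext _ _ _ _ (leading_scal _ _ _ (/ INR (S (S j)))
               (leading_add _ _ _ _ _ (leading_mul_lin _ _ _ (INR (S j)) H) H'))).
      intro t; cbn [dgbinom]; field; apply INR_S_neq_0.
Qed.

Lemma dgbinom_basis j : exists a, a <> 0 /\ leading j a (dgbinom j).
Proof. destruct (dgbinom_leading j) as [a [Ha H]]; exists a; split; [lra | exact H]. Qed.

Lemma poly_lt_dgbinom j : poly_lt (S j) (dgbinom j).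
Proof. destruct (dgbinom_leading j) as [a [_ H]]; exact (leading_poly_lt _ _ _ H). Qed.

Lemma poly_lt_fwd_surj d f : poly_lt d f -> exists F, poly_lt (S d) F /\ forall t, f t = fwd F t.
Proof.
  revert f; apply (poly_lt_basis_ind dgbinom
    (fun f => exists F, poly_lt (S d) F /\ forall t, f t = fwd F t)); [exact dgbinom_basis | |].
  - exists (fun _ => 0); split; [apply poly_lt_zero | intro; unfold fwd; ring].
  - intros j g c Hj _ [F [HF EF]].
    exists (fun t => F t + c * dgbinom (S j) t); split.
    + apply poly_lt_lin; [exact HF |].
      apply (poly_lt_le (S (S j))); [lia | apply poly_lt_dgbinom].
    + intro t; rewrite EF, <- dgbinom_fwd; unfold fwd; ring.
Qed.

(** * Iterated forward differences *)

Fixpoint fdiff (k : nat) (g : R -> R) : R -> R :=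
  match k with O => g | S k' => fdiff k' (fwd g) end.

Lemma fdiff_ext k g g' x : (forall t, g t = g' t) -> fdiff k g x = fdiff k g' x.
Proof. intro E; apply functional_extensionality in E; now subst. Qed.

Lemma fdiff_lin k g h c x :
  fdiff k (fun t => g t + c * h t) x = fdiff k g x + c * fdiff k h x.
Proof.
  revert g h; induction k as [|k IH]; intros g h; simpl; [reflexivity |].
  rewrite <- IH; apply fdiff_ext; intro; unfold fwd; ring.
Qed.

Lemma fdiff_zero k x : fdiff k (fun _ => 0) x = 0.
Proof.
  induction k as [|k IH]; simpl; [reflexivity |].
  rewrite <- IH; apply fdiff_ext; intro; unfold fwd; ring.
Qed.

Lemma fdiff_dgbinom k j x :
  fdiff k (dgbinom j) x = if (k <=? j)%nat then dgbinom (j - k) x else 0.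
Proof.
  revert j; induction k as [|k IH]; intros [|j]; simpl; try reflexivity.
  - rewrite <- (fdiff_zero k x); apply fdiff_ext; intro; unfold fwd; simpl; ring.
  - rewrite <- IH; apply fdiff_ext, dgbinom_fwd.
Qed.

(* Unlike [Binomial.C k i], [gbinom (INR k) i] vanishes for [i > k], so the sum may run
   up to any [n >= k]. *)
Lemma fdiff_expand k n g x : (k <= n)%nat ->
  fdiff k g x = sum_n (fun i => gbinom (INR k) i * (-1) ^ (k + i) * g (x + INR i)) n.
Proof.
  revert g; induction k as [|k IH]; intros g Hk.
  - destruct n as [|n]; [rewrite sum_O | rewrite sum_n_shift].
    + simpl; rewrite gbinom_0, Rplus_0_r; ring.
    + rewrite (sum_n_ext_R _ (fun _ => 0)), sum_n_const
        by (intro i; rewrite gbinom_nat_gt by lia; ring).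
      simpl; rewrite gbinom_0, Rplus_0_r; ring.
  - destruct n as [|n]; [lia |]; simpl fdiff; rewrite IH by lia.
    set (U i := gbinom (INR k) i * (-1) ^ (k + i) * g (x + INR i)).
    set (V i := gbinom (INR k) i * (-1) ^ (k + i) * g (x + INR (S i))).
    set (W i := gbinom (INR (S k)) i * (-1) ^ (S k + i) * g (x + INR i)).
    transitivity (sum_n V n + (-1) * (U O + sum_n (fun i => U (S i)) n)).
    + assert (HV : sum_n V (S n) = sum_n V n :> R).
      { rewrite sum_n_SR; unfold V at 2; rewrite gbinom_nat_gt by lia; ring. }
      rewrite <- sum_n_shift, <- HV, <- sum_n_lin.
      apply sum_n_ext_R; intro i; unfold U, V, fwd; rewrite S_INR, Rplus_assoc; ring.
    + rewrite sum_n_shift, (sum_n_ext_R (fun i => W (S i)) (fun i => V i + (-1) * U (S i))),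
        sum_n_lin.
      * unfold U, W; rewrite !gbinom_0, !pow_add; cbn [pow]; ring.
      * intro i; unfold U, V, W.
        rewrite S_INR, gbinom_pascal, !pow_add; cbn [pow]; ring.
Qed.

Lemma ex_RInt_cont (F : R -> R) x y : (forall t, continuous F t) -> ex_RInt F x y.
Proof. intro Hc; apply (ex_RInt_continuous (V := R_CompleteNormedModule)); intros; apply Hc. Qed.

Lemma continuous_comp_affine (F : R -> R) u c :
  (forall t, continuous F t) -> forall t, continuous (fun s => F (u * s + c)) t.
Proof.
  intros Hc t; apply (continuous_comp (fun s => u * s + c) F); [| apply Hc].
  apply (ex_derive_continuous (K := R_AbsRing) (V := R_NormedModule)); auto_derive; auto.
Qed.

Lemma RInt_lin (g h : R -> R) c x y :
  (forall t, continuous g t) -> (forall t, continuous h t) ->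
  RInt (fun t => g t + c * h t) x y = RInt g x y + c * RInt h x y.
Proof.
  intros Hg Hh; apply is_RInt_unique, (is_RInt_plus g (fun t => c * h t)).
  - exact (RInt_correct _ _ _ (ex_RInt_cont g x y Hg)).
  - exact (is_RInt_scal _ _ _ c _ (RInt_correct _ _ _ (ex_RInt_cont h x y Hh))).
Qed.

Lemma RInt_Chasles_R (F : R -> R) x y z :
  (forall t, continuous F t) -> RInt F x y + RInt F y z = RInt F x z.
Proof. intro Hc; apply (RInt_Chasles (V := R_CompleteNormedModule)); apply ex_RInt_cont, Hc. Qed.

Lemma RInt_swap_R (F : R -> R) x y : (forall t, continuous F t) -> RInt F y x = - RInt F x y.
Proof.
  intro Hc; symmetry; apply (opp_RInt_swap (V := R_CompleteNormedModule)), ex_RInt_cont, Hc.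
Qed.

Lemma RInt_comp_affine (F : R -> R) u c x y : (forall t, continuous F t) ->
  u * RInt (fun s => F (u * s + c)) x y = RInt F (u * x + c) (u * y + c).
Proof.
  intro Hc; rewrite <- RInt_comp_lin by (apply ex_RInt_cont, Hc).
  symmetry; apply (RInt_scal (fun s => F (u * s + c))), ex_RInt_cont, continuous_comp_affine, Hc.
Qed.

Lemma RInt_comp_scale (F : R -> R) h x y : (forall t, continuous F t) ->
  RInt F (x * h) (y * h) = h * RInt (fun s => F (s * h)) x y.
Proof.
  intro Hc.
  replace (x * h) with (h * x + 0) by ring; replace (y * h) with (h * y + 0) by ring.
  rewrite <- RInt_comp_affine by auto.
  f_equal; apply RInt_ext; intros; f_equal; ring.
Qed.

Lemma RInt_fwd (F : R -> R) x y : (forall t, continuous F t) ->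
  RInt (fwd F) x y = RInt F y (y + 1) - RInt F x (x + 1).
Proof.
  intro Hc.
  replace (fwd F) with (fun t => F (1 * t + 1) + (-1) * F t)
    by (apply functional_extensionality; intro; unfold fwd; rewrite Rmult_1_l; ring).
  rewrite RInt_lin, <- (Rmult_1_l (RInt (fun t => F (1 * t + 1)) x y)), RInt_comp_affine
    by (auto using continuous_comp_affine).
  rewrite !Rmult_1_l.
  pose proof (RInt_Chasles_R F x y (y + 1) Hc); pose proof (RInt_Chasles_R F x (x + 1) (y + 1) Hc).
  lra.
Qed.

Lemma RInt_dgbinom j x y : RInt (dgbinom j) x y = gbinom y (S j) - gbinom x (S j).
Proof.
  apply is_RInt_unique, (is_RInt_derive (fun t => gbinom t (S j))).
  - intros; apply is_derive_gbinom.
  - intros; apply (poly_lt_continuous _ _ _ (poly_lt_dgbinom j)).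
Qed.

(** * End corrections *)

Definition end_corr (b : nat -> R) (m : nat) (g : R -> R) : R :=
  sum_n (fun k => b k * fdiff k g 0) m.

Lemma end_corr_ext b m g g' : (forall t, g t = g' t) -> end_corr b m g = end_corr b m g'.
Proof. intro E; apply functional_extensionality in E; now subst. Qed.

Lemma end_corr_lin b m g h c :
  end_corr b m (fun t => g t + c * h t) = end_corr b m g + c * end_corr b m h.
Proof.
  unfold end_corr; rewrite <- sum_n_lin; apply sum_n_ext_R; intro k; rewrite fdiff_lin; ring.
Qed.

Lemma end_corr_zero b m : end_corr b m (fun _ => 0) = 0.
Proof.
  unfold end_corr; rewrite (sum_n_ext_R _ (fun _ => 0)), sum_n_const; [ring |].
  intro k; rewrite fdiff_zero; ring.
Qed.

Lemma end_corr_dgbinom b m i : (i <= m)%nat ->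
  end_corr b m (dgbinom i) = sum_n_m (fun k => (-1) ^ (i - k) / INR (i - k + 1) * b k) 0 i.
Proof.
  unfold end_corr; induction 1 as [|m Him IH].
  - apply sum_n_m_ext_loc; intros k Hk.
    rewrite fdiff_dgbinom, (proj2 (Nat.leb_le k i)), dgbinom_at0 by lia; apply Rmult_comm.
  - rewrite sum_n_SR, IH, fdiff_dgbinom, (proj2 (Nat.leb_gt (S m) i)) by lia; ring.
Qed.

Lemma corr_coef_sum_n m b i : (i <= m)%nat ->
  corr_coef m b i = sum_n (fun k => gbinom (INR k) i * (-1) ^ (k + i) * b k) m.
Proof.
  intro Him; rewrite (sum_n_skip_zeros _ i) by (auto; intros; rewrite gbinom_nat_gt by lia; ring).
  apply sum_n_m_ext_loc; intros k Hk.
  now rewrite gbinom_nat, pow_m1_sub_add by lia.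
Qed.

Lemma end_corr_corr_coef b m g :
  end_corr b m g = sum_n (fun i => corr_coef m b i * g (INR i)) m.
Proof.
  transitivity (sum_n (fun k => sum_n (fun i =>
                  b k * (gbinom (INR k) i * (-1) ^ (k + i) * g (INR i))) m) m).
  - apply sum_n_ext_loc; intros k Hk.
    rewrite (fdiff_expand k m), sum_n_mult_l_R by lia.
    f_equal; apply sum_n_ext_R; intro i; now rewrite Rplus_0_l.
  - rewrite sum_n_switch; apply sum_n_ext_loc; intros i Hi.
    rewrite corr_coef_sum_n, <- sum_n_mult_r_R by lia.
    apply sum_n_ext_R; intro k; ring.
Qed.

Lemma end_corr_fwd_dgbinom a m b j : solves_system a m b -> (j <= S m)%nat ->
  end_corr b m (fwd (dgbinom j)) = dgbinom j 0 - RInt (dgbinom j) (- a) (1 - a).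
Proof.
  intros Hb Hj; rewrite RInt_dgbinom; destruct j as [|i].
  - rewrite (end_corr_ext _ _ _ (fun _ => 0)), end_corr_zero by (intro; unfold fwd; simpl; ring).
    rewrite !gbinom_1; simpl; ring.
  - rewrite (end_corr_ext _ _ _ (dgbinom i)), end_corr_dgbinom, Hb by (auto using dgbinom_fwd; lia).
    replace (1 - a) with (- a + 1) by ring.
    rewrite gbinom_pascal, dgbinom_at0.
    replace (i + 2)%nat with (S i + 1)%nat by lia; replace (i + 1)%nat with (S i) by lia.
    ring.
Qed.

Lemma end_corr_fwd a m b G : solves_system a m b -> poly_lt (S (S m)) G ->
  end_corr b m (fwd G) = G 0 - RInt G (- a) (1 - a).
Proof.
  intro Hb; revert G; apply (poly_lt_basis_ind dgbinom
    (fun G => end_corr b m (fwd G) = G 0 - RInt G (- a) (1 - a))); [exact dgbinom_basis | |].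
  - rewrite (end_corr_ext _ _ _ (fun _ => 0)), end_corr_zero, RInt_const
      by (intro; unfold fwd; ring).
    rewrite (scal_zero_r (V := R_CompleteNormedModule)); symmetry; now apply Rminus_diag_eq.
  - intros j g c Hj Hg IHg.
    assert (Hcg : forall t, continuous g t) by (intro; exact (poly_lt_continuous _ _ _ Hg)).
    assert (Hcu : forall t, continuous (dgbinom j) t)
      by (intro; exact (poly_lt_continuous _ _ _ (poly_lt_dgbinom j))).
    rewrite (end_corr_ext _ _ _ (fun t => fwd g t + c * fwd (dgbinom j) t))
      by (intro; unfold fwd; ring).
    rewrite end_corr_lin, IHg, (end_corr_fwd_dgbinom a), RInt_lin by (auto; lia).
    ring.
Qed.

Lemma end_corr_fwd_reflect a m b F x : solves_system a m b -> poly_lt (S (S m)) F ->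
  end_corr b m (fun s => fwd F (x - s)) = RInt F (x + a) (x + a + 1) - F (x + 1).
Proof.
  intros Hb HF.
  assert (HcF : forall t, continuous F t) by (intro; exact (poly_lt_continuous _ _ _ HF)).
  set (G s := (-1) * F ((-1) * s + (x + 1))).
  assert (HG : poly_lt (S (S m)) G) by (apply poly_lt_scal, poly_lt_comp_affine, HF).
  assert (HRG : RInt G (- a) (1 - a) = -1 * RInt (fun s => F (-1 * s + (x + 1))) (- a) (1 - a)).
  { apply (RInt_scal (fun s => F (-1 * s + (x + 1)))), ex_RInt_cont, continuous_comp_affine, HcF. }
  assert (EG : forall s, fwd F (x - s) = fwd G s).
  { intro s; unfold G, fwd.
    replace (-1 * (s + 1) + (x + 1)) with (x - s) by ring.
    replace (-1 * s + (x + 1)) with (x - s + 1) by ring; ring. }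
  rewrite (end_corr_ext _ _ _ _ EG), (end_corr_fwd a), HRG, RInt_comp_affine, RInt_swap_R by auto.
  unfold G; replace (-1 * 0 + (x + 1)) with (x + 1) by ring.
  replace (-1 * - a + (x + 1)) with (x + a + 1) by ring.
  replace (-1 * (1 - a) + (x + 1)) with (x + a) by ring.
  ring.
Qed.

Lemma integral_identity_unit_step a a' m b b' f n :
  solves_system a m b -> solves_system a' m b' -> poly_lt (S m) f ->
  RInt f (- a) (INR n + a')
  = sum_n (fun i => f (INR i)) n + end_corr b m f + end_corr b' m (fun s => f (INR n - s)) :> R.
Proof.
  intros Hb Hb' Hf.
  destruct (poly_lt_fwd_surj _ _ Hf) as [F [HF EF]].
  apply functional_extensionality in EF; subst f.
  assert (HcF : forall t, continuous F t) by (intro; exact (poly_lt_continuous _ _ _ HF)).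
  rewrite RInt_fwd, (end_corr_fwd a), (end_corr_fwd_reflect a') by auto.
  rewrite (sum_n_ext_R (fun i => fwd F (INR i)) (fun i => F (INR (S i)) - F (INR i))),
    (sum_n_telescope (fun i => F (INR i))) by (intro; unfold fwd; now rewrite S_INR).
  rewrite S_INR; replace (- a + 1) with (1 - a) by ring; simpl INR.
  ring.
Qed.

Theorem mainTheorem1 (alpha beta : R) (m : nat) (b b' : nat -> R) :
  solves_system alpha m b ->
  solves_system beta m b' ->
  forall (n : nat) (h : R), 0 < h ->
  forall p : nat -> R,
    let f := polyR m p in
    RInt f (- alpha * h) ((INR n + beta) * h)
    = h * sum_n (fun i => f (INR i * h)) n
      + h * sum_n (fun i => corr_coef m b i * f (INR i * h)) m
      + h * sum_n (fun i => corr_coef m b' i * f ((INR n - INR i) * h)) m.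
Proof.
  (* The identity holds for every real h. *)
  intros Hb Hb' n h _ p f.
  assert (Hf : poly_lt (S m) f) by apply poly_lt_polyR.
  assert (Hfh : poly_lt (S m) (fun s => f (s * h))).
  { apply (poly_lt_ext _ _ _ (poly_lt_comp_affine _ _ h 0 Hf)); intro; f_equal; ring. }
  rewrite RInt_comp_scale, (integral_identity_unit_step alpha beta m b b'), !end_corr_corr_coef
    by (auto; intro; exact (poly_lt_continuous _ _ _ Hf)).
  now rewrite !Rmult_plus_distr_l.
Qed.
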